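(* Let $a\in\mathbb{F}_q$ be nonzero, $n\geqslant 2$, and let $\mathcal{I}_n$ be the ideal of $\mathbb{F}_q[x_1,\dots,x_n]$ generated by $\mathcal{B}_n$. Then the set of common zeros of $\mathcal{I}_n$ in $\mathbb{F}_q^n$ is exactly $\mathcal{V}_n=\{v_0,v_1,\dots,v_n\}$, where $v_0=(0,\dots,0)$ and $v_k=\left(\binom{k}{1}a,\binom{k}{2}a^2,\dots,\binom{k}{k}a^k,0,\dots,0\right)\in\mathbb{F}_q^n$ for $1\leqslant k\leqslant n$. (These are precisely the values $(\xi_1(X),\dots,\xi_n(X))$ for $X$ ranging over $\{X\in\mathrm{M}(n,q):X^2=aX\}$, where $\det(\lambda I_n-X)=\lambda^n+\sum_{i=1}^n(-1)^i\xi_i(X)\lambda^{n-i}$.)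
   Context: $\mathbb{F}_q$ is the finite field with $q$ elements, and $\mathbb{F}_q[x_1,\dots,x_{n-1}]\subseteq\mathbb{F}_q[x_1,\dots,x_n]$. Define $\mathcal{B}_2=\{x_2^2-a^2x_2,\ x_2x_1-2ax_2,\ x_1^2-ax_1-2x_2\}\subseteq\mathbb{F}_q[x_1,x_2]$, and recursively for $n\geqslant 3$ $$\mathcal{B}_n=\left\{f-\frac{f(w_n)}{a^n}x_n : f\in\mathcal{B}_{n-1}\right\}\cup\left\{x_nx_i-\binom{n}{i}a^ix_n : i=1,\dots,n\right\},$$ where $w_n=\left(\binom{n}{1}a,\binom{n}{2}a^2,\dots,\binom{n}{n-1}a^{n-1}\right)\in\mathbb{F}_q^{n-1}$ and $f(w_n)$ denotes evaluation of $f\in\mathbb{F}_q[x_1,\dots,x_{n-1}]$ at $w_n$. *)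

From HB Require Import structures.
From mathcomp Require Import all_boot all_algebra.
From mathcomp Require Import mpoly.
Set Implicit Arguments. Unset Strict Implicit. Unset Printing Implicit Defensive.
Import GRing.Theory.
Local Open Scope ring_scope.

(* Variable x_{j+1} is 'X_j (j : 'I_n); F_q[x_1..x_{n-1}] is embedded in
   F_q[x_1..x_n] by mwiden. *)

Section Defs.
Variable F : finFieldType.
Variable a : F.

(* w_n = (C(n,1) a, ..., C(n,n-1) a^(n-1)) in F^(n-1), for n = m.+1 *)
Definition wpt (m : nat) : 'I_m -> F :=
  fun i => ('C(m.+1, i.+1))%:R * a ^+ i.+1.

Definition B2 : seq {mpoly F[2]} :=
  let x1 := 'X_(0 : 'I_2) in let x2 := 'X_(1 : 'I_2) in
  [:: x2 ^+ 2 - (a ^+ 2) *: x2;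
      x2 * x1 - (2%:R * a) *: x2;
      x1 ^+ 2 - a *: x1 - 2%:R *: x2].

(* Bgens m = B_{m+2}, a list of polynomials in F[x_1,...,x_{m+2}] *)
Fixpoint Bgens (m : nat) : seq {mpoly F[m.+2]} :=
  match m return seq {mpoly F[m.+2]} with
  | 0 => B2
  | k.+1 =>
    let xn : {mpoly F[k.+3]} := 'X_(@ord_max k.+2) in
    [seq mwiden f - (f.@[wpt (m:=k.+2)] / a ^+ k.+3) *: xn | f <- Bgens k]
    ++ [seq xn * 'X_i - (('C(k.+3, i.+1))%:R * a ^+ i.+1) *: xn
       | i <- enum 'I_k.+3]
  end.

Definition in_ideal_gen (R : comNzRingType) (S : seq R) (p : R) : Prop :=
  exists c : 'I_(size S) -> R, p = \sum_(i < size S) c i * S`_i.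

Definition vpt (n k : nat) : 'I_n -> F :=
  fun i => if (i.+1 <= k)%N then ('C(k, i.+1))%:R * a ^+ i.+1 else 0.

End Defs.

From HB Require Import structures.
From mathcomp Require Import all_boot all_algebra.
From mathcomp Require Import mpoly.
From mathcomp Require Import ring.
Local Open Scope ring_scope.
Import GRing.Theory.
Set Implicit Arguments.
Unset Strict Implicit.
Unset Printing Implicit Defensive.

(* We then show by induction on n >= 2 that
   the common zeros of B_n are exactly v_0, ..., v_n.
   - n = 2: the three equations y^2 = a^2 y, yx = 2ay, x^2 - ax = 2y force
     y = 0 and x in {0, a}, or y = a^2 and x = 2a, i.e. v_0, v_1, v_2.
   - n -> n+1: writing v = (v', t), the generators of B_{n+1} vanish at v iff
     f(v') = f(w_{n+1}) t / a^{n+1} for f in B_n, and t v_i = C(n+1,i) a^i t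
     for all i.  If t = 0 the second family is void and the first says v' is a
     zero of B_n (induction); if t != 0 the second family pins v down to
     v_{n+1}, which indeed satisfies the first family since its restriction
     is w_{n+1} and its last coordinate is a^{n+1} (here a != 0 is used). *)

Definition is_common_zero (R : comNzRingType) (n : nat)
    (S : seq {mpoly R[n]}) (v : 'I_n -> R) : bool :=
  all (fun f => f.@[v] == 0) S.

Lemma ideal_zerosP (R : comNzRingType) (n : nat) (S : seq {mpoly R[n]})
    (v : 'I_n -> R) :
  (forall p, in_ideal_gen S p -> p.@[v] = 0) <-> is_common_zero S v.
Proof.
split=> [vanish | /allP common].
- apply/allP=> f f_in_S; apply/eqP/vanish.
  have idx_lt : (index f S < size S)%N by rewrite index_mem.
  exists (fun j => (j == Ordinal idx_lt)%:R).
  rewrite (bigD1 (Ordinal idx_lt)) //= eqxx mul1r nth_index // big1 ?addr0 //.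
  by move=> j /negbTE ->; rewrite mul0r.
- move=> _ [c ->]; rewrite raddf_sum /=; apply: big1 => i _.
  by rewrite mevalM (eqP (common _ (mem_nth 0 (ltn_ord i)))) mulr0.
Qed.

Lemma meval_mwiden (R : comNzRingType) (n : nat) (p : {mpoly R[n]})
    (v : 'I_n.+1 -> R) :
  (mwiden p).@[v] = p.@[fun i => v (widen_ord (leqnSn n) i)].
Proof.
elim/mpolyind: p => [|c m p _ _ IHp]; first by rewrite mwiden0 !meval0.
rewrite mwidenD mwidenZ !mevalD !mevalZ IHp mwidenX !mevalX big_ord_recr /=.
rewrite mnmwiden_ordmax expr0 mulr1; congr (_ * _ + _).
by apply: eq_bigr => i _; rewrite mnmwiden_widen.
Qed.

Lemma eqfun_ord2 (T : Type) (f g : 'I_2 -> T) :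
  f =1 g <-> f 0 = g 0 /\ f 1 = g 1.
Proof.
split=> [fg | [f0 f1] [[|[|//]] i_lt]]; first by rewrite !fg.
- by rewrite (_ : Ordinal i_lt = 0) //; apply: val_inj.
- by rewrite (_ : Ordinal i_lt = 1) //; apply: val_inj.
Qed.

Section CommonZeros.
Variables (F : finFieldType) (a : F).

Lemma vptE (n k : nat) (i : 'I_n) : vpt a k i = ('C(k, i.+1))%:R * a ^+ i.+1.
Proof.
rewrite /vpt; case: ifP => // /negbT; rewrite -ltnNge => k_lt.
by rewrite bin_small // mul0r.
Qed.

Lemma vpt_small (n k : nat) (i : 'I_n) : (k <= i)%N -> vpt a k i = 0.
Proof. by rewrite /vpt ltnNge => ->. Qed.

Lemma vpt_restrict_top (n : nat) (i : 'I_n) :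
  vpt a n.+1 (widen_ord (leqnSn n) i) = wpt a i.
Proof. by rewrite vptE. Qed.

Lemma vpt_extend_by_zero (n : nat) (v : 'I_n.+1 -> F) (j : 'I_n.+1) :
  (fun i => v (widen_ord (leqnSn n) i)) =1 vpt a j -> v ord_max = 0 ->
  v =1 vpt a (widen_ord (leqnSn n.+1) j).
Proof.
move=> v'_eq v_last i; have [i_lt | i_ge] := ltnP i n.
  have -> : i = widen_ord (leqnSn _) (Ordinal i_lt) by apply: val_inj.
  exact: v'_eq.
have -> : i = ord_max.
  by apply: val_inj; apply/eqP; rewrite /= eqn_leq i_ge andbT -ltnS ltn_ord.
by rewrite vpt_small; [exact: v_last | exact: leq_ord].
Qed.

Lemma B2_common_zeros (v : 'I_2 -> F) :
  is_common_zero (B2 a) v <-> exists k : 'I_3, v =1 vpt a k.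
Proof.
have -> : is_common_zero (B2 a) v =
    [&& v 1 * v 1 - a ^+ 2 * v 1 == 0, v 1 * v 0 - 2%:R * a * v 1 == 0
      & v 0 * v 0 - a * v 0 - 2%:R * v 1 == 0].
  by rewrite /is_common_zero /= !(mevalB, mevalZ, mevalM, mevalXU) expr2 andbT.
have vpt0 (k : nat) : vpt a k (0 : 'I_2) = k%:R * a by rewrite vptE bin1.
have vpt1 (k : nat) : vpt a k (1 : 'I_2) = 'C(k, 2)%:R * a ^+ 2 by rewrite vptE.
split=> [/and3P[/eqP eq1 /eqP eq2 /eqP eq3] | [[k k_lt3]]].
- have [y0 | y_neq0] := eqVneq (v 1) 0.
  + have /eqP : v 0 * (v 0 - a) = 0 by rewrite -eq3 y0; ring.
    rewrite mulf_eq0 subr_eq0 => /orP[/eqP x0 | /eqP xa].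
    * by exists ord0; apply/eqfun_ord2; rewrite vpt0 vpt1 x0 y0 !mul0r.
    * exists (inord 1); apply/eqfun_ord2.
      by rewrite vpt0 vpt1 inordK // xa y0 mul1r mul0r.
  + have ya2 : v 1 = a ^+ 2.
      apply/eqP; rewrite -subr_eq0; apply/eqP/(mulfI y_neq0).
      by rewrite mulr0 -eq1; ring.
    have x2a : v 0 = 2%:R * a.
      apply/eqP; rewrite -subr_eq0; apply/eqP/(mulfI y_neq0).
      by rewrite mulr0 -eq2; ring.
    by exists ord_max; apply/eqfun_ord2; rewrite vpt0 vpt1 /= x2a ya2 mul1r.
- move/eqfun_ord2; rewrite vpt0 vpt1 /= => -[-> ->].
  case: k k_lt3 => [|[|[|//]]] _; rewrite ?bin0n ?bin1 ?binn ?bin_small //=;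
    by apply/and3P; split; apply/eqP; ring.
Qed.

Lemma Bgens_succ_common_zero (k : nat) (v : 'I_k.+3 -> F) :
  let v' := fun i => v (widen_ord (leqnSn k.+2) i) in
  let t := v ord_max in
  is_common_zero (Bgens a k.+1) v =
    all (fun g => g.@[v'] == g.@[wpt a (m:=k.+2)] / a ^+ k.+3 * t) (Bgens a k)
    && all (fun i => t * v i == ('C(k.+3, i.+1))%:R * a ^+ i.+1 * t)
           (enum 'I_k.+3).
Proof.
move=> v' t; rewrite /is_common_zero /= all_cat !all_map.
congr (_ && _).
- apply: eq_all => g /=.
  by rewrite mevalB mevalZ mevalXU meval_mwiden subr_eq0.
- apply: eq_all => i /=.
  by rewrite mevalB mevalZ mevalM !mevalXU subr_eq0.
Qed.

Hypothesis a_neq0 : a != 0.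

Lemma Bgens_common_zeros (m : nat) (v : 'I_m.+2 -> F) :
  is_common_zero (Bgens a m) v <-> exists k : 'I_m.+3, v =1 vpt a k.
Proof.
elim: m v => [|k IHk] v; first exact: B2_common_zeros.
rewrite Bgens_succ_common_zero /=.
set v' := fun i : 'I_k.+2 => _; set t := v ord_max.
split=> [/andP[/allP restr_eqs /allP last_eqs] | [j v_eq]].
- have [t0 | t_neq0] := eqVneq t 0.
  + have [j v'_eq] : exists j : 'I_k.+3, v' =1 vpt a j.
      apply/IHk/allP => g g_in; have /eqP := restr_eqs g g_in.
      by rewrite t0 mulr0 => ->.
    by exists (widen_ord (leqnSn _) j); apply: vpt_extend_by_zero.
  + exists ord_max => i; rewrite vptE; apply: (mulfI t_neq0).
    by rewrite (eqP (last_eqs i (mem_enum _ i))) mulrC.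
- have [j_lt | j_ge] := ltnP j k.+3.
  + have t0 : t = 0 by rewrite /t v_eq vpt_small.
    apply/andP; split; last by apply/allP => i _; rewrite t0 !mulr0 mul0r.
    have /IHk/allP v'_zero : exists j' : 'I_k.+3, v' =1 vpt a j'.
      by exists (Ordinal j_lt) => i; rewrite /v' v_eq.
    by apply/allP => g /v'_zero; rewrite t0 mulr0.
  + have jE : nat_of_ord j = k.+3.
      by apply/eqP; rewrite eqn_leq j_ge andbT leq_ord.
    have tE : t = a ^+ k.+3 by rewrite /t v_eq jE vptE binn mul1r.
    have v'_top : v' =1 wpt a (m:=k.+2).
      by move=> i; rewrite /v' v_eq jE vpt_restrict_top.
    apply/andP; split.
    * apply/allP => g _; rewrite tE divfK ?expf_neq0 //.
      by rewrite (meval_eq _ v'_top).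
    * by apply/allP => i _; rewrite v_eq jE vptE mulrC.
Qed.

End CommonZeros.

Theorem theorem4p7 (F : finFieldType) (a : F) (m : nat) :
  a != 0 ->
  forall v : 'I_m.+2 -> F,
    (forall p : {mpoly F[m.+2]}, in_ideal_gen (Bgens a m) p -> p.@[v] = 0)
    <-> (exists k : 'I_m.+3, forall i, v i = @vpt F a m.+2 k i).
Proof.
by move=> a_neq0 v; rewrite ideal_zerosP; apply: Bgens_common_zeros.
Qed.
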